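(* Let $\mathcal{C}$ be a complete category and $(F,G)$ a constructor specification on $\mathcal{C}$. For an object $X$ of the category of algebras $\mathrm{Alg}_{\mathcal{C}}(F,G)$, the type expressing that $X$ is initial is equivalent to the type expressing that $X$ is section inductive.
   Context: Work in Martin-Löf type theory with function extensionality; $\mathsf{Set}$ is the universe/category of sets (types satisfying UIP). For $F : \mathcal{C} \Rightarrow \mathsf{Set}$, $\int_{\mathcal{C}} F$ is the category of elements (objects $(X,x)$ with $x : FX$, morphisms $f$ with $F(f)\,x = y$). A functor $\mathcal{D} \Rightarrow \mathsf{Set}$ is continuous relative to $U : \mathcal{D} \Rightarrow \mathcal{D}_0$ ($\mathcal{D}_0$ complete) if it maps cones over small diagrams that $U$ sends to limit cones to limit cones in $\mathsf{Set}$. A constructor specification on complete $\mathcal{C}$ is a pair $(F,G)$ with $F : \mathcal{C} \Rightarrow \mathsf{Set}$ and $G : \int_{\mathcal{C}} F \Rightarrow \mathsf{Set}$ continuous relative to the forgetful functor to $\mathcal{C}$. $\mathrm{Alg}_{\mathcal{C}}(F,G)$ has objects $(X,\theta)$ with $\theta : (x : FX) \to G(X,x)$ and morphisms $f : X \to Y$ in $\mathcal{C}$ with $\psi(F(f)\,x) = G(\overline{f})(\theta\,x)$ for all $x : FX$, where $\overline f : (X,x) \to (Y,F(f)\,x)$. An object $X$ is initial if for every $Y$ the set of morphisms $X \to Y$ is contractible; it is section inductive if for every $p : Y \to X$ there exists $s : X \to Y$ with $p \circ s = \mathrm{id}_X$ (as a type: $\prod_{Y}\prod_{p : Y \to X}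 \sum_{s : X \to Y} (p \circ s = \mathrm{id}_X)$). *)

From Stdlib Require Import ProofIrrelevance.

Set Universe Polymorphism.
Set Polymorphic Inductive Cumulativity.
Set Implicit Arguments.
Unset Strict Implicit.

Record Category@{o h} := {
  ob :> Type@{o};
  hom : ob -> ob -> Type@{h};
  idm : forall x, hom x x;
  comp : forall x y z, hom y z -> hom x y -> hom x z;
  comp_idl : forall x y (f : hom x y), comp (idm y) f = f;
  comp_idr : forall x y (f : hom x y), comp f (idm x) = f;
  comp_assoc : forall x y z w (f : hom x y) (g : hom y z) (h : hom z w),
      comp h (comp g f) = comp (comp h g) f }.
Arguments idm {_} x.
Arguments comp {_ x y z} g f.
Arguments hom {_} x y.

Record Functor (C D : Category) := {
  fobj :> ob C -> ob D;
  fmap : forall x y, hom x y -> hom (fobj x) (fobj y);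
  fmap_id : forall x, fmap (idm x) = idm (fobj x);
  fmap_comp : forall x y z (f : hom x y) (g : hom y z),
      fmap (comp g f) = comp (fmap g) (fmap f) }.
Arguments fmap {C D} _ {x y} _.

Definition fcomp (C D E : Category) (G : Functor D E) (F : Functor C D)
  : Functor C E.
Proof.
  refine {| fobj := fun x => G (F x);
            fmap := fun x y f => fmap G (fmap F f) |}.
  - intro x. rewrite fmap_id. apply fmap_id.
  - intros x y z f g. rewrite fmap_comp. apply fmap_comp.
Defined.

Record Cone (J C : Category) (K : Functor J C) := {
  apex : ob C;
  leg : forall j, hom apex (K j);
  leg_nat : forall i j (u : hom i j), comp (fmap K u) (leg i) = leg j }.
Arguments apex {J C K} _.
Arguments leg {J C K} _ j.

Definition IsLimit (J C : Category) (K : Functor J C) (L : Cone K) :=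
  forall L' : Cone K,
    { h : hom (apex L') (apex L) |
      (forall j, comp (leg L j) h = leg L' j) /\
      (forall h', (forall j, comp (leg L j) h' = leg L' j) -> h' = h) }.

Definition mapCone (J C D : Category) (G : Functor C D) (K : Functor J C)
  (L : Cone K) : Cone (fcomp G K).
Proof.
  refine (@Build_Cone J D (fcomp G K) (G (apex L)) (fun j => fmap G (leg L j)) _).
  intros i j u. simpl. rewrite <- fmap_comp. rewrite leg_nat. reflexivity.
Defined.

(** Completeness: every diagram indexed by a small category (objects and
    morphisms in the universe [u] of sets) has a limit. *)
Definition Complete@{u o h +} (C : Category@{o h}) :=
  forall (J : Category@{u u}) (K : Functor J C), { L : Cone K & IsLimit L }.

Definition SetCat@{u u1 | u < u1} : Category@{u1 u} :=
  @Build_Category@{u1 u} Type@{u} (fun A B : Type@{u} => A -> B)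
    (fun A a => a) (fun A B C g f a => g (f a))
    (fun _ _ _ => eq_refl) (fun _ _ _ => eq_refl)
    (fun _ _ _ _ _ _ _ => eq_refl).

Definition ContinuousRel@{u u1 +} (D D0 : Category) (U : Functor D D0)
  (G : Functor D SetCat@{u u1}) :=
  forall (J : Category@{u u}) (K : Functor J D) (L : Cone K),
    IsLimit (mapCone U L) -> IsLimit (mapCone G L).

Lemma sig_eq_pi (A : Type) (P : A -> Prop) (a b : sig P) :
  proj1_sig a = proj1_sig b -> a = b.
Proof.
  destruct a as [a pa], b as [b pb]; simpl; intros ->.
  f_equal; apply proof_irrelevance.
Qed.

Definition ElOb (C : Category) (F : Functor C SetCat) := { X : ob C & F X }.
Definition ElHom (C : Category) (F : Functor C SetCat) (p q : ElOb F) :=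
  { f : hom (projT1 p) (projT1 q) | fmap F f (projT2 p) = projT2 q }.

Lemma el_id_pf (C : Category) (F : Functor C SetCat) (p : ElOb F) :
  fmap F (idm (projT1 p)) (projT2 p) = projT2 p.
Proof. rewrite fmap_id. reflexivity. Qed.

Lemma el_comp_pf (C : Category) (F : Functor C SetCat) (p q r : ElOb F)
  (g : ElHom q r) (f : ElHom p q) :
  fmap F (comp (proj1_sig g) (proj1_sig f)) (projT2 p) = projT2 r.
Proof.
  rewrite fmap_comp. simpl. rewrite (proj2_sig f). exact (proj2_sig g).
Qed.

Definition Elements (C : Category) (F : Functor C SetCat) : Category.
Proof.
  refine {| ob := ElOb F; hom := @ElHom C F;
            idm := fun p => exist _ (idm (projT1 p)) (el_id_pf p);
            comp := fun p q r g f =>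
              exist _ (comp (proj1_sig g) (proj1_sig f)) (el_comp_pf g f) |}.
  - intros; apply sig_eq_pi; apply comp_idl.
  - intros; apply sig_eq_pi; apply comp_idr.
  - intros; apply sig_eq_pi; apply comp_assoc.
Defined.

Definition forget (C : Category) (F : Functor C SetCat) : Functor (Elements F) C.
Proof.
  refine (@Build_Functor (Elements F) C (fun p : ElOb F => projT1 p)
            (fun p q (f : ElHom p q) => proj1_sig f) _ _);
  reflexivity.
Defined.

Record ConstructorSpec@{u u1 o h +} (C : Category@{o h}) := {
  csF : Functor C SetCat@{u u1};
  csG : Functor (Elements csF) SetCat@{u u1};
  csG_cont : ContinuousRel (forget csF) csG }.
Arguments csF {C} _.
Arguments csG {C} _.

Definition fbar (C : Category) (F : Functor C SetCat) (X Y : ob C)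
  (f : hom X Y) (x : F X) :
  @hom (Elements F) (existT _ X x) (existT _ Y (fmap F f x)) :=
  exist _ f eq_refl.

Definition AlgOb (C : Category) (S : ConstructorSpec C) :=
  { X : ob C & forall x : csF S X, csG S (existT _ X x) }.

Definition AlgHom (C : Category) (S : ConstructorSpec C) (A B : AlgOb S) :=
  { f : hom (projT1 A) (projT1 B) |
    forall x : csF S (projT1 A),
      projT2 B (fmap (csF S) f x) = fmap (csG S) (fbar f x) (projT2 A x) }.

Lemma alg_transport (C : Category) (F : Functor C SetCat)
  (G : Functor (Elements F) SetCat) (X Z : ob C) (x : F X) (z z' : F Z)
  (pz : z = z') (e : @hom (Elements F) (existT _ X x) (existT _ Z z))
  (e' : @hom (Elements F) (existT _ X x) (existT _ Z z'))
  (psi : forall w : F Z, G (existT _ Z w)) (t : G (existT _ X x)) :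
  proj1_sig e = proj1_sig e' -> psi z = fmap G e t -> psi z' = fmap G e' t.
Proof.
  subst z'. intros He H. rewrite H. f_equal. apply sig_eq_pi. exact He.
Qed.

Lemma alg_id_pf (C : Category) (S : ConstructorSpec C) (A : AlgOb S) :
  forall x : csF S (projT1 A),
    projT2 A (fmap (csF S) (idm (projT1 A)) x)
    = fmap (csG S) (fbar (idm (projT1 A)) x) (projT2 A x).
Proof.
  intro x.
  assert (pz : x = fmap (csF S) (idm (projT1 A)) x)
    by (rewrite fmap_id; reflexivity).
  apply (@alg_transport C (csF S) (csG S) _ _ x x _ pz
           (@idm (Elements (csF S)) (existT _ (projT1 A) x))).
  - reflexivity.
  - rewrite fmap_id. reflexivity.
Qed.

Lemma alg_comp_pf (C : Category) (S : ConstructorSpec C) (A B D : AlgOb S)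
  (g : AlgHom B D) (f : AlgHom A B) :
  forall x : csF S (projT1 A),
    projT2 D (fmap (csF S) (comp (proj1_sig g) (proj1_sig f)) x)
    = fmap (csG S) (fbar (comp (proj1_sig g) (proj1_sig f)) x) (projT2 A x).
Proof.
  intro x.
  destruct A as [XA tA], B as [XB tB], D as [XD tD],
           f as [f Hf], g as [g Hg]; simpl in *.
  assert (pz : fmap (csF S) g (fmap (csF S) f x)
               = fmap (csF S) (comp g f) x)
    by (rewrite fmap_comp; reflexivity).
  apply (@alg_transport C (csF S) (csG S) _ _ x _ _ pz
           (@comp (Elements (csF S)) _ _ _ (fbar g (fmap (csF S) f x)) (fbar f x))).
  - reflexivity.
  - rewrite Hg. rewrite Hf. rewrite fmap_comp. reflexivity.
Qed.

Definition Alg (C : Category) (S : ConstructorSpec C) : Category.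
Proof.
  refine {| ob := AlgOb S; hom := @AlgHom C S;
            idm := fun A => exist _ (idm (projT1 A)) (@alg_id_pf C S A);
            comp := fun A B D g f =>
              exist _ (comp (proj1_sig g) (proj1_sig f)) (@alg_comp_pf C S A B D g f) |}.
  - intros; apply sig_eq_pi; apply comp_idl.
  - intros; apply sig_eq_pi; apply comp_idr.
  - intros; apply sig_eq_pi; apply comp_assoc.
Defined.

Definition IsInitial (C : Category) (X : ob C) :=
  forall Y : ob C, { f : hom X Y & forall g : hom X Y, g = f }.

Definition IsSectionInductive (C : Category) (X : ob C) :=
  forall (Y : ob C) (p : hom Y X), { s : hom X Y | comp p s = idm X }.

Record Equiv (A B : Type) := {
  eqv_to : A -> B;
  eqv_from : B -> A;
  eqv_from_to : forall a, eqv_from (eqv_to a) = a;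
  eqv_to_from : forall b, eqv_to (eqv_from b) = b }.
Arguments IsInitial C X : clear implicits.
Arguments IsSectionInductive C X : clear implicits.

(* Initial objects are trivially section inductive.  Conversely, if X is
   section inductive and there are cones over every pair X, Y and every
   parallel pair f, g : X -> Y, then X is initial: a section of the leg
   E -> X of a cone over f, g forces f = g, and a section s of the leg P -> X
   of a cone over X, Y gives the morphism (P -> Y) o s.  In Alg(F, G) such
   cones are lifted from limits in C: over a limit L of the underlying
   diagram, the structure map at x : F L is the mediating map into G (L, x)
   for the cone of structure maps of the diagram, G (L, x) being a limit by
   relative continuity of G.  Once X is initial both types are propositions,
   so the logical equivalence is an equivalence of types. *)
From Stdlib Require Import ProofIrrelevance FunctionalExtensionality.

Set Universe Polymorphism.
Set Implicit Arguments.
Unset Strict Implicit.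

Section InitialSectionInductive.
Context (D : Category) (X : ob D).

Lemma initial_hom_unique (HI : IsInitial D X) (Y : ob D) (f g : hom X Y) : f = g.
Proof. rewrite (projT2 (HI Y) f), (projT2 (HI Y) g). reflexivity. Qed.

Definition initial_section_inductive (HI : IsInitial D X) : IsSectionInductive D X :=
  fun Y p => exist _ (projT1 (HI Y)) (initial_hom_unique HI _ _).

Lemma IsInitial_irrelevant (a b : IsInitial D X) : a = b.
Proof.
  apply functional_extensionality_dep. intro Y.
  destruct (a Y) as [f Hf], (b Y) as [f' Hf'].
  assert (f' = f) as -> by apply Hf.
  f_equal. apply functional_extensionality_dep. intro g. apply proof_irrelevance.
Qed.

Lemma IsSectionInductive_irrelevant (HI : IsInitial D X)
  (a b : IsSectionInductive D X) : a = b.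
Proof.
  apply functional_extensionality_dep. intro Y.
  apply functional_extensionality_dep. intro p.
  apply sig_eq_pi. apply (initial_hom_unique HI).
Qed.

Lemma section_inductive_hom_unique (HS : IsSectionInductive D X) (Y E : ob D)
  (f g : hom X Y) (e : hom E X) : comp f e = comp g e -> f = g.
Proof.
  intro Hfg. destruct (HS E e) as [s Hs].
  rewrite <- (comp_idr f), <- (comp_idr g), <- Hs, !comp_assoc, Hfg.
  reflexivity.
Qed.

Lemma section_inductive_initial (HS : IsSectionInductive D X)
  (forks : forall Y (f g : hom X Y), { E & { e : hom E X | comp f e = comp g e } })
  (spans : forall Y, { P & (hom P X * hom P Y)%type }) :
  IsInitial D X.
Proof.
  intro Y. destruct (spans Y) as [P [pX pY]]. destruct (HS P pX) as [s _].
  exists (comp pY s). intro g.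
  destruct (forks Y g (comp pY s)) as [E [e He]].
  exact (section_inductive_hom_unique HS He).
Qed.

End InitialSectionInductive.

(* The index category with objects [false], [true] and a [T]-indexed family of
   arrows [false -> true]: [T = Empty_set] gives a pair of objects, [T = bool]
   a parallel pair of arrows. *)
Definition ParallelHom (T : Type) (a b : bool) : Type :=
  match a, b with
  | false, true => T
  | true, false => Empty_set
  | _, _ => unit
  end.

Definition parallel_id (T : Type) (a : bool) : ParallelHom T a a :=
  match a with true => tt | false => tt end.

Definition parallel_comp (T : Type) (a b c : bool) :
  ParallelHom T b c -> ParallelHom T a b -> ParallelHom T a c :=
  match a, b, c return ParallelHom T b c -> ParallelHom T a b -> ParallelHom T a c with
  | false, false, false | true, true, true => fun _ _ => tt
  | false, false, true => fun g _ => g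
  | false, true, true => fun _ f => f
  | false, true, false | true, true, false => fun g _ => match g with end
  | true, false, _ => fun _ f => match f with end
  end.

Definition ParallelCat@{a} (T : Type@{a}) : Category@{a a}.
Proof.
  refine (@Build_Category bool (ParallelHom T) (@parallel_id T) (@parallel_comp T) _ _ _).
  - intros [] [] f; simpl in *; try destruct f; reflexivity.
  - intros [] [] f; simpl in *; try destruct f; reflexivity.
  - intros [] [] [] [] f g h; simpl in *;
      try destruct f; try destruct g; try destruct h; reflexivity.
Defined.

Section ParallelDiagram.
Context (D : Category) (A B : ob D) (T : Type) (a : T -> hom A B).

Definition parallel_obj (x : bool) : ob D := if x then B else A.

Definition parallel_map (x y : bool) :
  ParallelHom T x y -> hom (parallel_obj x) (parallel_obj y) :=
  match x, y with
  | false, false => fun _ => idm A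
  | true, true => fun _ => idm B
  | false, true => fun t => a t
  | true, false => fun e => match e with end
  end.

Definition parallel_diagram : Functor (ParallelCat T) D.
Proof.
  refine (@Build_Functor (ParallelCat T) D parallel_obj parallel_map _ _).
  - intros []; reflexivity.
  - intros [] [] [] f g; simpl in *; try destruct f; try destruct g; simpl;
      first [ symmetry; apply comp_idl | symmetry; apply comp_idr ].
Defined.

Lemma parallel_cone_leg (c : Cone parallel_diagram) (t : T) :
  comp (a t) (leg c false) = leg c true.
Proof. exact (leg_nat c (i := false) (j := true) t). Qed.

End ParallelDiagram.

Section WeakLimits.
Universe u.
Context (D : Category)
  (cones : forall (J : Category@{u u}) (K : Functor J D), Cone K).

Lemma cone_fork (A B : ob D) (f g : hom A B) :
  { E & { e : hom E A | comp f e = comp g e } }.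
Proof.
  set (c := cones (parallel_diagram (fun b : bool => if b then f else g))).
  exists (apex c), (leg c false).
  rewrite (parallel_cone_leg c true), (parallel_cone_leg c false). reflexivity.
Qed.

Lemma cone_span (A B : ob D) : { P & (hom P A * hom P B)%type }.
Proof.
  set (c := cones (parallel_diagram (A := A) (B := B) (fun e : Empty_set => match e with end))).
  exact (existT _ (apex c) (leg c false, leg c true)).
Qed.

End WeakLimits.

Section AlgCones.
Context (C : Category) (S : ConstructorSpec C).
Local Notation F := (csF S).
Local Notation G := (csG S).

Definition alg_forget : Functor (Alg S) C.
Proof.
  refine (@Build_Functor (Alg S) C (fun A => projT1 A)
            (fun A B f => proj1_sig f) _ _); reflexivity.
Defined.

Context (J : Category) (K : Functor J (Alg S))
  (L : Cone (fcomp alg_forget K)) (HL : IsLimit L).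

Section AtElement.
Context (x : F (apex L)).

Lemma elements_diagram_hom (i j : J) (u : hom i j) :
  fmap F (proj1_sig (fmap K u)) (fmap F (leg L i) x) = fmap F (leg L j) x.
Proof. rewrite <- (leg_nat L u). simpl. rewrite fmap_comp. reflexivity. Qed.

Definition elements_diagram : Functor J (Elements F).
Proof.
  refine (@Build_Functor J (Elements F)
            (fun j => existT (fun Y => F Y) (projT1 (K j)) (fmap F (leg L j) x))
            (fun i j u => exist _ (proj1_sig (fmap K u)) (elements_diagram_hom u)) _ _).
  - intros; apply sig_eq_pi; simpl; rewrite fmap_id; reflexivity.
  - intros; apply sig_eq_pi; simpl; rewrite fmap_comp; reflexivity.
Defined.

Definition elements_cone : Cone elements_diagram.
Proof.
  refine (@Build_Cone J (Elements F) elements_diagram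
            (existT _ (apex L) x) (fun j => fbar (leg L j) x) _).
  intros i j u. apply sig_eq_pi. exact (leg_nat L u).
Defined.

Lemma elements_cone_limit : IsLimit (mapCone (forget F) elements_cone).
Proof.
  intro L'.
  destruct (HL (@Build_Cone J C (fcomp alg_forget K) (apex L') (leg L') (leg_nat L')))
    as [h Hh].
  exists h. exact Hh.
Qed.

(* Naturality is the algebra-morphism equation of [fmap K u], transported
   along [elements_diagram_hom]. *)
Definition structure_cone : Cone (fcomp G elements_diagram).
Proof.
  refine (@Build_Cone J SetCat (fcomp G elements_diagram) unit
            (fun j _ => projT2 (K j) (fmap F (leg L j) x)) _).
  intros i j u. apply functional_extensionality. intros []. symmetry.
  exact (alg_transport (elements_diagram_hom u) (e := fbar (proj1_sig (fmap K u)) _)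
           (e' := fmap elements_diagram u) eq_refl (proj2_sig (fmap K u) _)).
Defined.

Definition lifted_structure : G (existT _ (apex L) x) :=
  proj1_sig (csG_cont elements_cone_limit structure_cone) tt.

Lemma lifted_structure_leg (j : J) :
  projT2 (K j) (fmap F (leg L j) x) = fmap G (fbar (leg L j) x) lifted_structure.
Proof.
  exact (eq_sym (f_equal (fun k => k tt)
    (proj1 (proj2_sig (csG_cont elements_cone_limit structure_cone)) j))).
Qed.

End AtElement.

Definition lifted_cone : Cone K.
Proof.
  unshelve refine (@Build_Cone J (Alg S) K (existT _ (apex L) lifted_structure) _ _).
  - intro j. exists (leg L j). intro x. exact (lifted_structure_leg x j).
  - intros i j u. apply sig_eq_pi. exact (leg_nat L u).
Defined.

End AlgCones.

Definition alg_cones@{u u1 o h +} (C : Category@{o h}) (HC : Complete@{u o h} C)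
  (S : ConstructorSpec@{u u1 o h _} C) (J : Category@{u u}) (K : Functor J (Alg S)) :
  Cone K :=
  lifted_cone (projT2 (HC J (fcomp (alg_forget S) K))).

Polymorphic Theorem mainTheorem10@{u u1 o h +} (C : Category@{o h})
  (HC : Complete@{u o h} C) (S : ConstructorSpec@{u u1 o h _} C) (X : ob (Alg S)) :
  Equiv (IsInitial (Alg S) X) (IsSectionInductive (Alg S) X).
Proof.
  assert (to_initial : IsSectionInductive (Alg S) X -> IsInitial (Alg S) X).
  { intro HS. apply (section_inductive_initial HS).
    - intros Y f g. exact (cone_fork (alg_cones HC (S := S)) f g).
    - intro Y. exact (cone_span (alg_cones HC (S := S)) X Y). }
  refine (@Build_Equiv _ _ (@initial_section_inductive (Alg S) X) to_initial _ _).
  - intro a. apply IsInitial_irrelevant.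
  - intro b. apply IsSectionInductive_irrelevant, to_initial, b.
Qed.
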